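(* Let $\mathcal B$ be finite, $\eta>0$, $Q,\tilde Q\in\mathbb R^{\mathcal B}$, $V=\eta^{-1}\log\sum_be^{\eta Q(b)}$, $\tilde V=\eta^{-1}\log\sum_be^{\eta\tilde Q(b)}$, $A=Q-V\mathbf 1$, $\tilde A=\tilde Q-\tilde V\mathbf 1$, $\nu=\exp(\eta A)$, $\tilde\nu=\exp(\eta\tilde A)$. Then for every $\xi\in\mathbb R$, $$D_{\rm TV}(\nu,\tilde\nu)\le\eta\Bigl\langle\nu,\ |\tilde Q-Q-\xi\mathbf 1|+\tfrac\eta2\exp\bigl(\eta|\tilde Q-Q-\xi\mathbf 1|\bigr)(\tilde Q-Q-\xi\mathbf 1)^2\Bigr\rangle_{\mathcal B},$$ in particular $D_{\rm TV}(\nu,\tilde\nu)\le\eta\bigl\langle\nu,|\tilde A-A|+\frac\eta2\exp(\eta|\tilde A-A|)(\tilde A-A)^2\bigr\rangle_{\mathcal B}$ (all operations entrywise). Moreover, $$D_{\rm TV}(\nu,\tilde\nu)\ge\tfrac12\bigl\langle\nu,\ \eta\exp(-\eta|\tilde A-A|)\,|\tilde A-A|\bigr\rangle_{\mathcal B},$$ and if $B_A>0$ satisfies $\max\{\|A\|_\infty,\|\tilde A\|_\infty\}\le B_A$, then $$D_{\rm TV}(\nu,\tilde\nu)\ge\frac{\eta}{2(1+2\eta B_A)}\langle\nu,|\tilde A-A|\rangle_{\mathcal B}.$$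
   Context: $D_{\rm TV}(p,q)=\frac12\|p-q\|_1$; $\langle f,g\rangle_{\mathcal B}=\sum_{b\in\mathcal B}f(b)g(b)$; $\mathbf 1$ is the all-ones vector. *)

From mathcomp Require Import all_boot all_order all_algebra.
From mathcomp Require Import all_classical all_reals all_analysis.
Set Implicit Arguments. Unset Strict Implicit. Unset Printing Implicit Defensive.
Import Order.TTheory GRing.Theory Num.Theory.
Local Open Scope ring_scope.

Section Defs.
Variables (R : realType) (B : finType).

Definition softV (eta : R) (Q : B -> R) : R :=
  ln (\sum_(b : B) expR (eta * Q b)) / eta.

Definition advantage (eta : R) (Q : B -> R) : B -> R :=
  fun b => Q b - softV eta Q.

Definition softpol (eta : R) (Q : B -> R) : B -> R :=
  fun b => expR (eta * advantage eta Q b).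

Definition dTV (p q : B -> R) : R := 2^-1 * \sum_(b : B) `|p b - q b|.

Definition innerB (f g : B -> R) : R := \sum_(b : B) f b * g b.

Definition supnorm (f : B -> R) : R := \big[Num.max/0]_(b : B) `|f b|.
End Defs.

From mathcomp Require Import all_boot all_order all_algebra.
From mathcomp Require Import all_classical all_reals all_analysis.
From mathcomp Require Import ring lra.
Set Implicit Arguments. Unset Strict Implicit. Unset Printing Implicit Defensive.
Import Order.TTheory GRing.Theory Num.Theory numFieldNormedType.Exports.
Local Open Scope ring_scope.

(* Softmax is invariant under constant shifts of [Q], so for every [xi] the policy
   [nut] is [nu] reweighted by [w = exp(eta (Qt - Q - xi))] and renormalised;
   renormalising at most doubles [<nu, |w - 1|>], because
   [|<nu, w> - 1| <= <nu, |w - 1|>].  Also [nut = nu exp(eta (At - A))] exactly, so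
   [D_TV(nu, nut)] is half of [<nu, |exp(eta (At - A)) - 1|>].  The upper bounds then
   follow from [|e^x - 1| <= |x| + x^2/2 e^|x|], the lower bounds from
   [|e^x - 1| >= |x| / (1 + |x|) >= e^-|x| |x|]. *)

Section ExpBounds.
Variable R : realType.
Implicit Types x : R.

Lemma is_derive_ge0_le (f df : R -> R) (a b : R) :
  (forall x, is_derive x 1 f (df x)) -> (forall x, a < x < b -> 0 <= df x) ->
  a <= b -> f a <= f b.
Proof.
move=> fd df_ge0 ab.
have cf : continuous f.
  by move=> x; apply/differentiable_continuous/derivable1_diffP; have [] := fd x.
apply: (@ger0_derive1_ndecr _ f a b) => //.
- by move=> x; rewrite in_itv /= derive1E derive_val; exact: df_ge0.
- exact: continuous_subspaceT.
Qed.

Lemma expR_sub1Dx_le x : 0 <= x -> expR x - (1 + x) <= x ^+ 2 / 2 * expR x.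
Proof.
move=> x_ge0.
(* [h' t = t (1 - e^-t) >= 0] on [t >= 0] and [h 0 = 1]; multiply [1 <= h x] by [e^x]. *)
pose h (t : R) := (1 + t) * expR (- t) + t ^+ 2 / 2.
have hd t : is_derive t (1 : R) h (t * (1 - expR (- t))).
  by apply: is_derive_eq; rewrite !scaler0 /GRing.scale /=; field.
have : h 0 <= h x.
  apply: (@is_derive_ge0_le h (fun t => t * (1 - expR (- t))) _ _ hd) => // t /andP[t_gt0 _].
  by apply: mulr_ge0; rewrite ?subr_ge0 ?expR_le1 ?oppr_le0 ltW.
rewrite /h oppr0 expR0 expr0n /= mul0r !addr0 mulr1 => h_ge1.
have := ler_wpM2l (expR_ge0 x) h_ge1.
rewrite mulr1 mulrDr mulrCA expRxMexpNx_1; lra.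
Qed.

(* Only for [x >= 0] is the second-order term needed; for [x < 0], [1 - e^x <= -x]. *)
Lemma norm_expR_sub1_le x : `|expR x - 1| <= `|x| + x ^+ 2 / 2 * expR `|x|.
Proof.
have := expR_ge1Dx x.
have : 0 <= x ^+ 2 / 2 * expR `|x| by rewrite mulr_ge0 ?expR_ge0 // divr_ge0 ?sqr_ge0.
have [x_ge0|x_lt0] := leP 0 x.
  rewrite (ger0_norm x_ge0) => ? ?; rewrite ger0_norm; last lra.
  by have := expR_sub1Dx_le x_ge0; lra.
rewrite (ltr0_norm x_lt0) ler0_norm; first lra.
by rewrite subr_le0 expR_le1 ltW.
Qed.

Lemma norm_expR_sub1_ge x : `|x| / (1 + `|x|) <= `|expR x - 1|.
Proof.
have := expR_ge1Dx x.
have [x_ge0|x_lt0] := leP 0 x.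
  rewrite (ger0_norm x_ge0) => ?; rewrite ger0_norm; last lra.
  rewrite ler_pdivrMr; nra.
rewrite (ltr0_norm x_lt0) ler0_norm => [_|]; last by rewrite subr_le0 expR_le1 ltW.
have := ler_wpM2l (expR_ge0 x) (expR_ge1Dx (- x)).
rewrite expRxMexpNx_1 ler_pdivrMr; nra.
Qed.

Lemma expRN_le_inv1D x : 0 <= x -> expR (- x) <= (1 + x)^-1.
Proof.
move=> x_ge0; rewrite expRN lef_pV2 ?expR_ge1Dx // posrE ?expR_gt0 //; lra.
Qed.

End ExpBounds.

Section Reweighting.
Variables (R : realType) (B : finType).
Implicit Types p q w f g : B -> R.

Lemma innerB_scalel (a : R) p f : a * innerB p f = innerB p (fun b => a * f b).
Proof. by rewrite /innerB mulr_sumr; apply: eq_bigr => b _; rewrite mulrCA. Qed.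

Lemma ler_innerB p f g : (forall b, 0 <= p b) -> (forall b, f b <= g b) ->
  innerB p f <= innerB p g.
Proof. by move=> p_ge0 fg; apply: ler_sum => b _; rewrite ler_wpM2l. Qed.

Lemma reweightE p q w (c : R) : \sum_b q b = 1 -> (forall b, q b = p b * w b * c) ->
  forall b, q b = p b * w b / innerB p w.
Proof.
move=> q_sum1 qE b; rewrite qE; congr (_ * _); apply/esym/mulr1_eq.
by rewrite -q_sum1 /innerB mulr_suml; apply: eq_bigr => a _; rewrite qE mulrC.
Qed.

Lemma dTV_reweight_le p w : (forall b, 0 <= p b) -> \sum_b p b = 1 -> (forall b, 0 <= w b) ->
  dTV p (fun b => p b * w b / innerB p w) <= innerB p (fun b => `|w b - 1|).
Proof.
move=> p_ge0 p_sum1 w_ge0; set S := innerB p w.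
have S_ge0 : 0 <= S by apply: sumr_ge0 => b _; rewrite mulr_ge0.
have split_dist b : `|p b - p b * w b / S| <= p b * `|w b - 1| + p b * w b * `|1 - S^-1|.
  have -> : p b - p b * w b / S = p b * (1 - w b) + p b * w b * (1 - S^-1) by ring.
  rewrite (le_trans (ler_normD _ _)) // !normrM.
  by rewrite (ger0_norm (p_ge0 b)) (ger0_norm (w_ge0 b)) (distrC 1 (w b)).
have norm_S : S * `|1 - S^-1| <= `|S - 1|.
  have [->|S_neq0] := eqVneq S 0; first by rewrite mul0r.
  by rewrite -{1}(ger0_norm S_ge0) -normrM mulrBr mulr1 divff.
have S_sub1 : `|S - 1| <= innerB p (fun b => `|w b - 1|).
  rewrite -{1}p_sum1 /S /innerB -sumrB (le_trans (ler_norm_sum _ _ _)) //.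
  by apply: ler_sum => b _; rewrite -{2}(mulr1 (p b)) -mulrBr normrM ger0_norm.
rewrite /dTV; have := ler_sum (index_enum B) (fun b (_ : true) => split_dist b).
rewrite big_split /= -mulr_suml -/(innerB p w) -/S -/(innerB p (fun b => `|w b - 1|)); lra.
Qed.

End Reweighting.

Lemma normr_le_supnorm (R : realType) (B : finType) (f : B -> R) (b : B) :
  `|f b| <= supnorm f.
Proof. exact: le_bigmax. Qed.

Section Softmax.
Variables (R : realType) (B : finType) (eta : R).
Implicit Types b : B.

Lemma sum_expR_gt0 (f : B -> R) b : 0 < \sum_c expR (f c).
Proof.
apply: (lt_le_trans (expR_gt0 (f b))).
by rewrite (bigD1 b) //= lerDl sumr_ge0 // => c _; exact: expR_ge0.
Qed.

Lemma softpolE (Q : B -> R) b : eta != 0 ->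
  softpol eta Q b = expR (eta * Q b) / \sum_c expR (eta * Q c).
Proof.
move=> eta_neq0; rewrite /softpol /advantage /softV mulrBr mulrCA divff // mulr1.
by rewrite expRB lnK // posrE (sum_expR_gt0 _ b).
Qed.

Lemma softpol_sum1 (Q : B -> R) b : eta != 0 -> \sum_c softpol eta Q c = 1.
Proof.
move=> eta_neq0; under eq_bigr do rewrite softpolE //.
by rewrite -mulr_suml divff // gt_eqF // (sum_expR_gt0 _ b).
Qed.

Variables Q Qt : B -> R.
Local Notation nu := (softpol eta Q).
Local Notation nut := (softpol eta Qt).
Local Notation A := (advantage eta Q).
Local Notation At := (advantage eta Qt).

Lemma softpol_ratio b : nut b = nu b * expR (eta * (At b - A b)).
Proof. by rewrite /softpol -expRD -mulrDr addrC subrK. Qed.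

Lemma dTV_softpolE :
  dTV nu nut = 2^-1 * innerB nu (fun b => `|expR (eta * (At b - A b)) - 1|).
Proof.
rewrite /dTV /innerB; congr (_ * _); apply: eq_bigr => b _.
by rewrite softpol_ratio -{1}(mulr1 (nu b)) -mulrBr normrM ger0_norm ?expR_ge0 // distrC.
Qed.

Lemma softpol_reweight (xi : R) b : eta != 0 ->
  let w c := expR (eta * (Qt c - Q c - xi)) in nut b = nu b * w b / innerB nu w.
Proof.
move=> eta_neq0 w.
apply: (@reweightE _ _ _ _ _ (expR (eta * (xi - (softV eta Qt - softV eta Q))))).
  exact: (softpol_sum1 _ b).
move=> c; rewrite softpol_ratio -mulrA; congr (_ * _).
by rewrite /w -expRD -mulrDr /advantage; congr (expR (eta * _)); ring.
Qed.

Hypothesis eta_gt0 : 0 < eta.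
Let eta_neq0 : eta != 0 := lt0r_neq0 eta_gt0.

Lemma dTV_softpol_le (xi : R) :
  dTV nu nut <= eta * innerB nu (fun b => `|Qt b - Q b - xi|
                  + eta / 2 * expR (eta * `|Qt b - Q b - xi|) * (Qt b - Q b - xi) ^+ 2).
Proof.
have [b0 _|B0] := pickP (@predT B); last by rewrite /dTV /innerB !big_pred0 ?mulr0.
set w := fun b => expR (eta * (Qt b - Q b - xi)).
have -> : nut = fun b => nu b * w b / innerB nu w.
  by apply/funext => b; rewrite (softpol_reweight xi).
have nu_ge0 b : 0 <= nu b := expR_ge0 _.
have w_ge0 b : 0 <= w b := expR_ge0 _.
apply: le_trans (dTV_reweight_le nu_ge0 (softpol_sum1 Q b0 eta_neq0) w_ge0) _.
rewrite innerB_scalel; apply: ler_innerB => // b.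
set d := Qt b - Q b - xi.
have -> : eta * (`|d| + eta / 2 * expR (eta * `|d|) * d ^+ 2) =
    `|eta * d| + (eta * d) ^+ 2 / 2 * expR `|eta * d|.
  by rewrite normrM (gtr0_norm eta_gt0); ring.
exact: norm_expR_sub1_le.
Qed.

Lemma dTV_softpol_le_advantage :
  dTV nu nut <= eta * innerB nu (fun b => `|At b - A b|
                  + eta / 2 * expR (eta * `|At b - A b|) * (At b - A b) ^+ 2).
Proof.
have := dTV_softpol_le (softV eta Qt - softV eta Q).
have shiftE b : Qt b - Q b - (softV eta Qt - softV eta Q) = At b - A b.
  by rewrite /advantage; ring.
by rewrite /innerB; under eq_bigr do rewrite shiftE.
Qed.

Lemma dTV_softpol_ge :
  2^-1 * innerB nu (fun b => eta * expR (- (eta * `|At b - A b|)) * `|At b - A b|)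
    <= dTV nu nut.
Proof.
rewrite dTV_softpolE ler_wpM2l //; apply: ler_innerB => b; first exact: expR_ge0.
set x := eta * (At b - A b); apply: le_trans (norm_expR_sub1_ge x).
have -> : eta * expR (- (eta * `|At b - A b|)) * `|At b - A b| = `|x| * expR (- `|x|).
  by rewrite normrM (gtr0_norm eta_gt0) mulrAC mulrC.
by rewrite ler_wpM2l // expRN_le_inv1D.
Qed.

Lemma dTV_softpol_ge_bounded (c : R) : (forall b, `|At b - A b| <= c) ->
  eta / (2 * (1 + eta * c)) * innerB nu (fun b => `|At b - A b|) <= dTV nu nut.
Proof.
move=> dA_le; have [b0 _|B0] := pickP (@predT B); last first.
  by rewrite /dTV /innerB !big_pred0 ?mulr0.
have c_ge0 : 0 <= c := le_trans (normr_ge0 _) (dA_le b0).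
have -> : eta / (2 * (1 + eta * c)) * innerB nu (fun b => `|At b - A b|) =
    2^-1 * innerB nu (fun b => `|eta * (At b - A b)| / (1 + eta * c)).
  rewrite !innerB_scalel; congr innerB; apply/funext => b.
  by rewrite normrM (gtr0_norm eta_gt0) invfM; ring.
rewrite dTV_softpolE ler_wpM2l //; apply: ler_innerB => b; first exact: expR_ge0.
set x := eta * (At b - A b); apply: le_trans (norm_expR_sub1_ge x).
have etac_ge0 : 0 <= eta * c := mulr_ge0 (ltW eta_gt0) c_ge0.
have x_ge0 := normr_ge0 x.
rewrite ler_wpM2l // lef_pV2 ?posrE; [|lra|lra].
by rewrite lerD2l /x normrM (gtr0_norm eta_gt0) ler_wpM2l ?dA_le // ltW.
Qed.

End Softmax.

Theorem mainTheorem10 (R : realType) (B : finType) (eta : R) (Q Qt : B -> R) :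
  0 < eta ->
  let A := advantage eta Q in
  let At := advantage eta Qt in
  let nu := softpol eta Q in
  let nut := softpol eta Qt in
  (forall xi : R,
     let D := fun b => Qt b - Q b - xi in
     dTV nu nut <=
       eta * innerB nu (fun b => `|D b| + eta / 2 * expR (eta * `|D b|) * (D b) ^+ 2))
  /\ dTV nu nut <=
       eta * innerB nu (fun b => `|At b - A b|
                         + eta / 2 * expR (eta * `|At b - A b|) * (At b - A b) ^+ 2)
  /\ 2^-1 * innerB nu (fun b => eta * expR (- (eta * `|At b - A b|)) * `|At b - A b|)
       <= dTV nu nut
  /\ (forall BA : R, 0 < BA -> Num.max (supnorm A) (supnorm At) <= BA ->
       eta / (2 * (1 + 2 * eta * BA)) * innerB nu (fun b => `|At b - A b|)
         <= dTV nu nut).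
Proof.
move=> eta_gt0 A At nu nut.
split; first by move=> xi; exact: dTV_softpol_le.
split; first exact: dTV_softpol_le_advantage.
split; first exact: dTV_softpol_ge.
move=> BA _; rewrite ge_max => /andP[A_le At_le].
have dA_le b : `|At b - A b| <= 2 * BA.
  have := normr_le_supnorm A b; have := normr_le_supnorm At b.
  have := ler_normB (At b) (A b); lra.
by rewrite (mulrC 2 eta) -(mulrA eta 2 BA); exact: dTV_softpol_ge_bounded.
Qed.
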